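(* Let $x_1,\dots,x_N\in\mathbb R^d$, let $V\in\mathbb R^{d\times d}$ be symmetric positive definite, let $\theta,\hat\theta\in\mathbb R^d$ and $\beta\ge0$ satisfy $\|\hat\theta-\theta\|_V\le\beta$, and let $Q_1,\dots,Q_N\ge0$. Define $h_m=x_m^\top\hat\theta+\beta\|x_m\|_{V^{-1}}$ and $\tilde\mu(n\mid S)=\frac{\exp(h_n)}{1+\sum_{m\in S}\exp(h_m)}$ for $n\in S\subseteq[N]$. Then for every nonempty $S\subseteq[N]$, $$\sum_{n\in S}\big(\tilde\mu(n\mid S)-\mu(n\mid S,\theta)\big)Q_n\le2\beta\max_{n\in S}\big(\|x_n\|_{V^{-1}}\,Q_n\big).$$
   Context: For $S\subseteq[N]$, $\theta\in\mathbb R^d$ and $n\in S$, $\mu(n\mid S,\theta)=\frac{\exp(x_n^\top\theta)}{1+\sum_{m\in S}\exp(x_m^\top\theta)}$. For a positive definite matrix $A$, $\|v\|_A=\sqrt{v^\top Av}$. *)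

From HB Require Import structures.
From mathcomp Require Import all_boot all_order all_algebra.
From mathcomp Require Import reals.
From mathcomp Require Import sequences exp.
Set Implicit Arguments. Unset Strict Implicit. Unset Printing Implicit Defensive.
Import Order.TTheory GRing.Theory Num.Theory.
Local Open Scope ring_scope.

Section Defs.
Variables (R : realType) (d N : nat).

Definition qform (A : 'M[R]_d) (v : 'cV[R]_d) : R := ((v^T *m A *m v) 0 0).

Definition wnorm (A : 'M[R]_d) (v : 'cV[R]_d) : R := Num.sqrt (qform A v).

Definition symmetricmx (A : 'M[R]_d) : Prop := A^T = A.

Definition posdefmx (A : 'M[R]_d) : Prop :=
  symmetricmx A /\ forall v : 'cV[R]_d, v != 0 -> 0 < qform A v.

Definition dotv (x y : 'cV[R]_d) : R := ((x^T *m y) 0 0).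

Definition mnl_prob (x : 'I_N -> 'cV[R]_d) (S : {set 'I_N}) (theta : 'cV[R]_d)
  (n : 'I_N) : R :=
  expR (dotv (x n) theta) / (1 + \sum_(m in S) expR (dotv (x m) theta)).

Definition hopt (x : 'I_N -> 'cV[R]_d) (V : 'M[R]_d) (thetah : 'cV[R]_d)
  (beta : R) (m : 'I_N) : R :=
  dotv (x m) thetah + beta * wnorm (invmx V) (x m).

Definition mnl_opt (x : 'I_N -> 'cV[R]_d) (V : 'M[R]_d) (thetah : 'cV[R]_d)
  (beta : R) (S : {set 'I_N}) (n : 'I_N) : R :=
  expR (hopt x V thetah beta n) / (1 + \sum_(m in S) expR (hopt x V thetah beta m)).

End Defs.

From HB Require Import structures.
From mathcomp Require Import all_boot all_order all_algebra.
From mathcomp Require Import reals.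
From mathcomp Require Import sequences exp.
From mathcomp Require Import ring lra.
Import Order.TTheory GRing.Theory Num.Theory.
Local Open Scope ring_scope.
Set Implicit Arguments. Unset Strict Implicit.

(* Write u_n = x_n^T theta and w_n = ||x_n||_{V^-1}. By Cauchy-Schwarz for the
   inner product given by V, |x_n^T (thetah - theta)| <= w_n ||thetah - theta||_V
   <= beta w_n, so the optimistic utility satisfies 0 <= h_n - u_n <= 2 beta w_n.
   Raising utilities only enlarges the MNL denominator, hence
   mu(n|S,theta) >= mu~(n|S) exp(u_n - h_n) >= mu~(n|S) (1 - (h_n - u_n)), i.e.
   mu~(n|S) - mu(n|S,theta) <= mu~(n|S) (h_n - u_n). Summing against Q and using
   sum_n mu~(n|S) <= 1 gives the bound. *)

Section PosDefForm.
Variables (R : realType) (d : nat) (V : 'M[R]_d).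
Hypothesis V_posdef : posdefmx V.

Definition mxform (a c : 'cV[R]_d) : R := (a^T *m V *m c) 0 0.

Lemma mxformBl a1 a2 c : mxform (a1 - a2) c = mxform a1 c - mxform a2 c.
Proof. by rewrite /mxform linearB /= !mulmxBl !mxE. Qed.

Lemma mxformBr a c1 c2 : mxform a (c1 - c2) = mxform a c1 - mxform a c2.
Proof. by rewrite /mxform mulmxBr !mxE. Qed.

Lemma mxformZl t a c : mxform (t *: a) c = t * mxform a c.
Proof. by rewrite /mxform linearZ /= -!scalemxAl mxE. Qed.

Lemma mxformZr t a c : mxform a (t *: c) = t * mxform a c.
Proof. by rewrite /mxform -scalemxAr mxE. Qed.

Lemma mxform0r a : mxform a 0 = 0.
Proof. by rewrite /mxform mulmx0 mxE. Qed.

Lemma mxformC a c : mxform a c = mxform c a.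
Proof.
rewrite /mxform -[in LHS](trmxK (a^T *m V *m c)) [in LHS]mxE.
by rewrite !trmx_mul trmxK (proj1 V_posdef) mulmxA.
Qed.

Lemma mxform_ge0 a : 0 <= mxform a a.
Proof.
have [->|a0] := eqVneq a 0; first by rewrite mxform0r.
exact/ltW/(proj2 V_posdef).
Qed.

Lemma mxform_CauchySchwarz a c : mxform a c ^+ 2 <= mxform a a * mxform c c.
Proof.
have [->|c0] := eqVneq c 0; first by rewrite !mxform0r expr0n /= mulr0.
have qc_gt0 : 0 < mxform c c by exact: (proj2 V_posdef).
(* the form is nonnegative at [<c,c> a - <a,c> c]; expanding, this is
   [<c,c> (<a,a> <c,c> - <a,c>^2) >= 0] *)
have := mxform_ge0 (mxform c c *: a - mxform a c *: c).
rewrite mxformBl !mxformBr !mxformZl !mxformZr (mxformC c a).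
nra.
Qed.

Lemma posdefmx_unit : V \in unitmx.
Proof.
rewrite unitmxE unitfE; apply/negP => /det0P [v v0 vV0].
have := proj2 V_posdef v^T; rewrite trmx_eq0 => /(_ v0).
by rewrite /qform trmxK vV0 mul0mx mxE ltxx.
Qed.

Lemma dotv_le_wnorm (x v : 'cV[R]_d) :
  `|dotv x v| <= wnorm (invmx V) x * wnorm V v.
Proof.
pose y := invmx V *m x.
have xE : x = V *m y by rewrite /y mulmxA mulmxV ?posdefmx_unit // mul1mx.
have -> : dotv x v = mxform y v.
  by rewrite /dotv /mxform {1}xE trmx_mul (proj1 V_posdef).
have -> : wnorm (invmx V) x = Num.sqrt (mxform y y).
  rewrite /wnorm /qform /mxform /y trmx_mul trmx_inv (proj1 V_posdef).
  by rewrite -!mulmxA (mulmxA V) mulmxV ?posdefmx_unit // mul1mx.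
rewrite /wnorm -sqrtrM ?mxform_ge0 // -sqrtr_sqr ler_sqrt.
  exact: mxform_CauchySchwarz.
by rewrite mulr_ge0 ?mxform_ge0.
Qed.

End PosDefForm.

Section MNL.
Variables (R : realType) (I : finType) (S : {set I}).

Definition mnl (u : I -> R) (n : I) : R :=
  expR (u n) / (1 + \sum_(m in S) expR (u m)).

Lemma mnl_denom_gt0 (u : I -> R) : 0 < 1 + \sum_(m in S) expR (u m).
Proof. by rewrite ltr_wpDr ?ltr01 // sumr_ge0 // => m _; rewrite ltW ?expR_gt0. Qed.

Lemma mnl_ge0 (u : I -> R) n : 0 <= mnl u n.
Proof. by rewrite divr_ge0 ?ltW ?expR_gt0 ?mnl_denom_gt0. Qed.

Lemma sum_mnl_le1 (u : I -> R) : \sum_(n in S) mnl u n <= 1.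
Proof.
rewrite -mulr_suml ler_pdivrMr ?mnl_denom_gt0 // mul1r.
by rewrite lerDr ler01.
Qed.

Lemma mnl_sub_le (u h : I -> R) n :
  (forall m, m \in S -> u m <= h m) -> mnl h n - mnl u n <= mnl h n * (h n - u n).
Proof.
move=> le_uh.
have le_denom : 1 + \sum_(m in S) expR (u m) <= 1 + \sum_(m in S) expR (h m).
  by rewrite lerD2l ler_sum // => m /le_uh; rewrite ler_expR.
have : mnl h n * (1 + (u n - h n)) <= mnl u n.
  apply: (@le_trans _ _ (mnl h n * expR (u n - h n))).
    by rewrite ler_wpM2l ?mnl_ge0 ?expR_ge1Dx.
  rewrite /mnl mulrAC -expRD addrC subrK ler_wpM2l ?(ltW (expR_gt0 _)) //.
  by rewrite lef_pV2 ?posrE ?mnl_denom_gt0.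
lra.
Qed.

Lemma sum_mnl_sub_le (u h w Q : I -> R) (k : R) :
  0 <= k -> (forall n, 0 <= Q n) ->
  (forall m, m \in S -> 0 <= h m - u m <= k * w m) ->
  \sum_(n in S) (mnl h n - mnl u n) * Q n
    <= k * \big[Num.max/0]_(n in S) (w n * Q n).
Proof.
move=> k_ge0 Q_ge0 huw.
set M := \big[Num.max/0]_(n in S) (w n * Q n).
have M_ge0 : 0 <= M by exact: bigmax_ge_id.
apply: (@le_trans _ _ (\sum_(n in S) mnl h n * (k * M))).
  apply: ler_sum => n nS; have /andP[_ le_huk] := huw n nS.
  have le_uh m : m \in S -> u m <= h m by move=> /huw /andP[]; rewrite subr_ge0.
  apply: le_trans (ler_wpM2r (Q_ge0 n) (mnl_sub_le n le_uh)) _.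
  rewrite -mulrA ler_wpM2l ?mnl_ge0 //.
  apply: le_trans (ler_wpM2r (Q_ge0 n) le_huk) _.
  by rewrite -mulrA ler_wpM2l // le_bigmax_cond.
rewrite -mulr_suml ler_piMl ?mulr_ge0 //; exact: sum_mnl_le1.
Qed.

End MNL.

Theorem mainTheorem7 (R : realType) (d N : nat)
  (x : 'I_N -> 'cV[R]_d) (V : 'M[R]_d) (theta thetah : 'cV[R]_d) (beta : R)
  (Q : 'I_N -> R) (S : {set 'I_N}) :
  posdefmx V ->
  0 <= beta ->
  wnorm V (thetah - theta) <= beta ->
  (forall n, 0 <= Q n) ->
  S != set0 ->
  \sum_(n in S) (mnl_opt x V thetah beta S n - mnl_prob x S theta n) * Q n
    <= 2 * beta * \big[Num.max/0]_(n in S) (wnorm (invmx V) (x n) * Q n).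
Proof.
move=> V_posdef beta_ge0 err_le_beta Q_ge0 _.
pose u m := dotv (x m) theta.
apply: (@sum_mnl_sub_le _ _ _ u (hopt x V thetah beta)) => [|//|m _].
  by rewrite mulr_ge0.
set w := wnorm (invmx V) (x m).
have hopt_subE :
    hopt x V thetah beta m - u m = dotv (x m) (thetah - theta) + beta * w.
  by rewrite /hopt /u /dotv -/w mulmxBr !mxE; ring.
have : `|dotv (x m) (thetah - theta)| <= beta * w.
  apply: le_trans (dotv_le_wnorm V_posdef _ _) _.
  by rewrite mulrC ler_wpM2r ?sqrtr_ge0.
by rewrite hopt_subE ler_norml => /andP[lo hi]; apply/andP; split; lra.
Qed.
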